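(* Assume Hypotheses 1 and 2 (see context). For any $x_1,x_2\in U$ and $t_0>0$, if $x_2\in\mathcal{C}(x_1)$, $\Phi([0,t_0],x_1)\subset U$ and $\Phi([0,t_0],x_2)\subset U$, then $\Phi(t,x_2)\in\mathcal{C}(\Phi(t,x_1))$ for all $t\in[0,t_0]$.
   Context: System $\dot a=f(a,z)$, $\dot z=g(a,z)$, $(a,z)\in\mathbb{R}^n\times\mathbb{R}^m$, $x=(a,z)$, $X=\mathbb{R}^n\times\mathbb{R}^m$, with flow $\Phi(t,x)$; Euclidean inner product, norm, operator norm. $\mathcal{L}(x_1,x_2)=\|a_2-a_1\|^2-\|z_2-z_1\|^2$ for $x_i=(a_i,z_i)$; $\mathcal{C}(x)=\{x'\in X:\mathcal{L}(x',x)\ge0\}$; $\mathbb{B}_d(x)=\{(a',z'):\|a'-a\|\le d,\|z'-z\|\le d\}$. Hypothesis 1: $U$ is open and convex in $\mathbb{R}^n\times\mathbb{R}^m$, and there is $d>0$ with $\mathcal{C}(x)\cap U\subset\mathbb{B}_d(x)$ for all $x\in U$. Hypothesis 2: $f,g$ are $C^1$ on $U$; there exist a continuous positive $\alpha:U\to\mathbb{R}$, a continuous nonnegative $\ell:U\to\mathbb{R}$ and $c_1>0$ with, for all $x\in U$: $\langle a',D_af(x)a'\rangle\ge\alpha(x)\|a'\|^2$ for all $a'$; $\langle z',D_zg(x)z'\rangle\le\ell(x)\|z'\|^2$ for all $z'$; $\alpha(x)\ge\ell(x)+\|D_zf(x)\|+\|D_ag(x)\|+c_1$. *)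

From mathcomp Require Import all_boot.
From Stdlib Require Import Reals ClassicalEpsilon.
Local Open Scope R_scope.

Definition vec (n : nat) := 'I_n -> R.

Definition vadd {n} (u v : vec n) : vec n := fun i => u i + v i.
Definition vsub {n} (u v : vec n) : vec n := fun i => u i - v i.
Definition vscal {n} (c : R) (u : vec n) : vec n := fun i => c * u i.

Definition dot {n} (u v : vec n) : R := \big[Rplus/0]_(i < n) (u i * v i).
Definition norm {n} (u : vec n) : R := sqrt (dot u u).

(* X = R^n x R^m, points x = (a, z) *)
Definition X (n m : nat) := (vec n * vec m)%type.
Definition xsub {n m} (x y : X n m) : X n m := (vsub x.1 y.1, vsub x.2 y.2).
Definition xadd {n m} (x y : X n m) : X n m := (vadd x.1 y.1, vadd x.2 y.2).
Definition xscal {n m} (c : R) (x : X n m) : X n m := (vscal c x.1, vscal c x.2).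
Definition xnorm {n m} (x : X n m) : R := sqrt (dot x.1 x.1 + dot x.2 x.2).

Definition is_linear {p q} (L : vec p -> vec q) : Prop :=
  forall (u v : vec p) (c : R),
    L (vadd u v) = vadd (L u) (L v) /\ L (vscal c u) = vscal c (L u).
Definition opnorm {p q} (L : vec p -> vec q) : R :=
  epsilon (inhabits 0)
    (fun s => is_lub (fun r => exists v : vec p, norm v <= 1 /\ r = norm (L v)) s).

Definition is_open_X {n m} (U : X n m -> Prop) : Prop :=
  forall x, U x -> exists e, 0 < e /\ forall y, xnorm (xsub y x) < e -> U y.
Definition is_convex_X {n m} (U : X n m -> Prop) : Prop :=
  forall x y (s : R), U x -> U y -> 0 <= s <= 1 ->
    U (xadd x (xscal s (xsub y x))).

Definition cont_on {n m k} (U : X n m -> Prop) (h : X n m -> vec k) : Prop :=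
  forall x, U x -> forall eps, 0 < eps -> exists delta, 0 < delta /\
    forall y, U y -> xnorm (xsub y x) < delta -> norm (vsub (h y) (h x)) < eps.
Definition cont_on_R {n m} (U : X n m -> Prop) (h : X n m -> R) : Prop :=
  forall x, U x -> forall eps, 0 < eps -> exists delta, 0 < delta /\
    forall y, U y -> xnorm (xsub y x) < delta -> Rabs (h y - h x) < eps.

Definition frechet {n m k} (F : X n m -> vec k)
    (DA : vec n -> vec k) (DZ : vec m -> vec k) (x : X n m) : Prop :=
  is_linear DA /\ is_linear DZ /\
  forall eps, 0 < eps -> exists delta, 0 < delta /\
    forall y, xnorm (xsub y x) < delta ->
      norm (vsub (vsub (F y) (F x))
                 (vadd (DA (xsub y x).1) (DZ (xsub y x).2)))
        <= eps * xnorm (xsub y x).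

Definition C1_on {n m k} (U : X n m -> Prop) (F : X n m -> vec k)
    (DA : X n m -> vec n -> vec k) (DZ : X n m -> vec m -> vec k) : Prop :=
  (forall x, U x -> frechet F (DA x) (DZ x) x) /\
  (forall v, cont_on U (fun x => DA x v)) /\
  (forall w, cont_on U (fun x => DZ x w)).

Definition Lfun {n m} (x1 x2 : X n m) : R :=
  norm (vsub x2.1 x1.1) ^ 2 - norm (vsub x2.2 x1.2) ^ 2.
Definition cone {n m} (x : X n m) (x' : X n m) : Prop := Lfun x' x >= 0.
Definition boxB {n m} (d : R) (x : X n m) (x' : X n m) : Prop :=
  norm (vsub x'.1 x.1) <= d /\ norm (vsub x'.2 x.2) <= d.

(* phi : R -> X solves  a' = f(a,z), z' = g(a,z)  at every t in [0, t0]
   (two-sided derivatives, coordinatewise) *)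
Definition solves_on {n m} (f : X n m -> vec n) (g : X n m -> vec m)
    (phi : R -> X n m) (t0 : R) : Prop :=
  forall t, 0 <= t <= t0 ->
    (forall i : 'I_n, derivable_pt_lim (fun s => (phi s).1 i) t (f (phi t) i)) /\
    (forall j : 'I_m, derivable_pt_lim (fun s => (phi s).2 j) t (g (phi t) j)).

(* Cone invariance (Lemma 2.1).  Write Lc(t) = |da(t)|^2 - |dz(t)|^2 for the
   gap (da, dz) = phi1 t - phi2 t between two solutions; the claim is that
   Lc >= 0 on [0, t0] as soon as Lc(0) >= 0.

   By the mean value theorem along the segment [phi2 t, phi1 t] (convex
   subset of U), Lc'(t)/2 >= alpha |da|^2 - (|Dzf| + |Dag|) |da| |dz| - ell |dz|^2
   evaluated at some point y of that segment.  Hypothesis 2 then gives: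
   - if |dz| <= |da| (boundary or inside of the cone) and da <> 0, Lc' > 0;
   - if |da| <= |dz| (outside the cone), Lc' >= 2 alpha(y) Lc.
   A supremum argument reduces the theorem to excluding that Lc is negative
   on an interval (s, t1] with Lc(s) >= 0.  If da(s) <> 0 the positive
   derivative at s forbids it; if da(s) = 0 the solutions collide at s, alpha
   is bounded near the collision, and a Gronwall barrier for e^{-2Kt} Lc(t)
   forbids it. *)

From HB Require Import structures.
From mathcomp Require Import all_boot.
From Stdlib Require Import Reals Lra Psatz ClassicalEpsilon FunctionalExtensionality.
Local Open Scope R_scope.

HB.instance Definition _ :=
  Monoid.isComLaw.Build R 0 Rplus (fun a b c => esym (Rplus_assoc a b c)) Rplus_comm Rplus_0_l.

Section Sums.
Variables (I : Type) (r : seq I) (P : pred I).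

Lemma sum_mull (F : I -> R) c :
  \big[Rplus/0]_(i <- r | P i) (c * F i) = c * \big[Rplus/0]_(i <- r | P i) F i.
Proof. by apply: (big_rec2 (fun x y => x = c * y)) => [|i x y _ ->]; ring. Qed.

Lemma sum_ge0 (F : I -> R) :
  (forall i, 0 <= F i) -> 0 <= \big[Rplus/0]_(i <- r | P i) F i.
Proof. by move=> H; apply: (big_ind (fun x => 0 <= x)) => [|x y|i _]; [lra|lra|]. Qed.

Lemma sum_le (F G : I -> R) : (forall i, F i <= G i) ->
  \big[Rplus/0]_(i <- r | P i) F i <= \big[Rplus/0]_(i <- r | P i) G i.
Proof.
move=> H; apply: (big_rec2 (fun x y => x <= y)) => [|i x y _]; first lra.
by have := H i; lra.
Qed.

Lemma sum_sub (F G : I -> R) :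
  \big[Rplus/0]_(i <- r | P i) (F i - G i) =
  \big[Rplus/0]_(i <- r | P i) F i - \big[Rplus/0]_(i <- r | P i) G i.
Proof.
by apply: (big_rec3 (fun x y z => x = y - z)) => [|i x y z _ ->]; ring.
Qed.

Lemma sum_abs (F : I -> R) :
  Rabs (\big[Rplus/0]_(i <- r | P i) F i) <= \big[Rplus/0]_(i <- r | P i) Rabs (F i).
Proof.
apply: (big_rec2 (fun x y => Rabs x <= y)) => [|i x y _ h]; first by rewrite Rabs_R0; lra.
by have := Rabs_triang (F i) x; lra.
Qed.

Lemma sum_deriv (F : I -> R -> R) (l : I -> R) t :
  (forall i, derivable_pt_lim (F i) t (l i)) ->
  derivable_pt_lim (fun s => \big[Rplus/0]_(i <- r | P i) F i s) t
                   (\big[Rplus/0]_(i <- r | P i) l i).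
Proof.
move=> H; elim: r => [|a r' IH].
  have -> : (fun s => \big[Rplus/0]_(i <- [::] | P i) F i s) = fun _ => 0.
    by apply: functional_extensionality => s; rewrite big_nil.
  by rewrite big_nil; apply: derivable_pt_lim_const.
have -> : (fun s => \big[Rplus/0]_(i <- a :: r' | P i) F i s) =
    fun s => if P a then F a s + \big[Rplus/0]_(i <- r' | P i) F i s
             else \big[Rplus/0]_(i <- r' | P i) F i s.
  by apply: functional_extensionality => s; rewrite big_cons.
by rewrite big_cons; case: (P a) => //; apply: derivable_pt_lim_plus.
Qed.
End Sums.

Section Euclid.
Context {p : nat}.
Implicit Types u v w : vec p.

Definition vzero : vec p := fun _ => 0.

Lemma dotC u v : dot u v = dot v u.
Proof. by rewrite /dot; apply: eq_bigr => i _; ring. Qed.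

Lemma dotDr u v w : dot u (vadd v w) = dot u v + dot u w.
Proof. by rewrite /dot -big_split /=; apply: eq_bigr => i _; rewrite /vadd; ring. Qed.

Lemma dotBr u v w : dot u (vsub v w) = dot u v - dot u w.
Proof. by rewrite /dot -sum_sub; apply: eq_bigr => i _; rewrite /vsub; ring. Qed.

Lemma dotZr c u v : dot u (vscal c v) = c * dot u v.
Proof. by rewrite /dot -sum_mull; apply: eq_bigr => i _; rewrite /vscal; ring. Qed.

Lemma dotBl u v w : dot (vsub v w) u = dot v u - dot w u.
Proof. by rewrite dotC dotBr dotC (dotC u). Qed.

Lemma dotZl c u v : dot (vscal c v) u = c * dot v u.
Proof. by rewrite dotC dotZr dotC. Qed.

Lemma dot_ge0 u : 0 <= dot u u.
Proof. by apply: sum_ge0 => i; nra. Qed.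

Lemma norm_ge0 u : 0 <= norm u.
Proof. exact: sqrt_pos. Qed.

Lemma norm_sq u : norm u ^ 2 = dot u u.
Proof. by rewrite /norm pow2_sqrt //; apply: dot_ge0. Qed.

Lemma coord_le u i : u i * u i <= dot u u.
Proof.
rewrite /dot (bigD1 i) //= -{1}(Rplus_0_r (u i * u i)).
by apply: Rplus_le_compat_l; apply: sum_ge0 => j; nra.
Qed.

Lemma dot_eq0 u : dot u u = 0 -> forall i, u i = 0.
Proof. by move=> h0 i; have := coord_le u i; rewrite h0; nra. Qed.

Lemma norm0 : norm vzero = 0.
Proof. by rewrite /norm /dot big1 ?sqrt_0 // => i _; rewrite /vzero; ring. Qed.

Lemma norm_scal c u : norm (vscal c u) = Rabs c * norm u.
Proof.
rewrite /norm dotZl dotZr -Rmult_assoc sqrt_mult; [|nra|apply: dot_ge0].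
by rewrite -[c * c]/(Rsqr c) sqrt_Rsqr_abs.
Qed.

(* Cauchy-Schwarz, squared form: expand |(v.v) u - (u.v) v|^2 >= 0. *)
Lemma cauchy_schwarz_sq u v : dot u v ^ 2 <= dot u u * dot v v.
Proof.
have [hv|hv] := Rle_lt_or_eq_dec 0 _ (dot_ge0 v).
  have := dot_ge0 (vsub (vscal (dot v v) u) (vscal (dot u v) v)).
  rewrite !dotBl !dotBr !dotZl !dotZr (dotC v u) => h.
  have : 0 <= dot v v * (dot u u * dot v v - dot u v ^ 2) by nra.
  rewrite -(Rmult_0_r (dot v v)) => /(Rmult_le_reg_l _ _ _ hv); lra.
have -> : dot u v = 0.
  by rewrite /dot big1 // => i _; rewrite (dot_eq0 _ (esym hv) i); ring.
by rewrite -hv; lra.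
Qed.

Lemma cauchy_schwarz u v : Rabs (dot u v) <= norm u * norm v.
Proof.
rewrite /norm -sqrt_mult; try apply: dot_ge0.
rewrite -sqrt_Rsqr_abs; apply: sqrt_le_1_alt; rewrite /Rsqr.
by have := cauchy_schwarz_sq u v; rewrite /= Rmult_1_r.
Qed.

Lemma dot_ge u v : - (norm u * norm v) <= dot u v.
Proof. by have := cauchy_schwarz u v; have := Rle_abs (- dot u v); rewrite Rabs_Ropp; lra. Qed.

Lemma dot_le u v : dot u v <= norm u * norm v.
Proof. by have := cauchy_schwarz u v; have := Rle_abs (dot u v); lra. Qed.
End Euclid.

(* A linear map between coordinate spaces is bounded on the unit ball, so its
   operator norm is a genuine least upper bound; hence |D v| <= |D| |v|. *)
Section OperatorNorm.
Variables (p q : nat) (D : vec p -> vec q).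
Hypothesis HD : is_linear D.

Lemma lin0 : D vzero = vzero.
Proof.
have -> : (@vzero p) = vscal 0 vzero.
  by apply: functional_extensionality => i; rewrite /vscal /vzero; ring.
rewrite (proj2 (HD vzero vzero 0)).
by apply: functional_extensionality => i; rewrite /vscal /vzero; ring.
Qed.

Lemma lin_sum (I : Type) (r : seq I) (c : I -> R) (E : I -> vec p) :
  D (fun j => \big[Rplus/0]_(i <- r) (c i * E i j)) =
  fun k => \big[Rplus/0]_(i <- r) (c i * D (E i) k).
Proof.
elim: r => [|a r IH].
  have -> : (fun j => \big[Rplus/0]_(i <- [::]) (c i * E i j)) = vzero.
    by apply: functional_extensionality => j; rewrite big_nil.
  by rewrite lin0; apply: functional_extensionality => j; rewrite big_nil.
have -> : (fun j => \big[Rplus/0]_(i <- a :: r) (c i * E i j)) =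
    vadd (vscal (c a) (E a)) (fun j => \big[Rplus/0]_(i <- r) (c i * E i j)).
  by apply: functional_extensionality => j; rewrite big_cons.
rewrite (proj1 (HD _ _ 0)) (proj2 (HD _ vzero (c a))) IH.
by apply: functional_extensionality => j; rewrite big_cons.
Qed.

Definition ebase (i j : 'I_p) : R := if i == j then 1 else 0.

Lemma vec_decomp (v : vec p) :
  v = fun j => \big[Rplus/0]_(i <- index_enum 'I_p) (v i * ebase i j).
Proof.
apply: functional_extensionality => j.
rewrite (bigD1_seq j) ?index_enum_uniq ?mem_index_enum //= big1_seq.
  by rewrite /ebase eqxx; ring.
by move=> i /andP [hij _]; rewrite /ebase (negbTE hij); ring.
Qed.

(* On the unit ball, every coordinate of D v is bounded by the sum of the
   absolute values of the corresponding coordinates of the D (ebase i). *)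
Lemma lin_bounded : exists M, forall v : vec p, norm v <= 1 -> norm (D v) <= M.
Proof.
pose Mk k := \big[Rplus/0]_(i <- index_enum 'I_p) Rabs (D (ebase i) k).
exists (sqrt (\big[Rplus/0]_(k <- index_enum 'I_q) (Mk k * Mk k))) => v hv.
have hvi : forall i, Rabs (v i) <= 1.
  move=> i; have := coord_le v i; rewrite -norm_sq.
  have := norm_ge0 v => h0 h1.
  by rewrite -Rabs_R1; apply: Rsqr_le_abs_0; rewrite /Rsqr; nra.
have -> : D v = fun k => \big[Rplus/0]_(i <- index_enum 'I_p) (v i * D (ebase i) k).
  by rewrite {1}(vec_decomp v) lin_sum.
rewrite /norm; apply: sqrt_le_1_alt.
apply: sum_le => k /=.
set S := \big[Rplus/0]_(i <- _) _.
have hS : Rabs S <= Mk k.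
  apply: Rle_trans (sum_abs _ _ _ _) _; apply: sum_le => i.
  rewrite Rabs_mult; have := hvi i; have := Rabs_pos (D (ebase i) k).
  by have := Rabs_pos (v i); nra.
rewrite -[S * S]/(Rsqr S) Rsqr_abs /Rsqr.
by have := Rabs_pos S; nra.
Qed.

Lemma opnorm_lub :
  is_lub (fun r => exists v : vec p, norm v <= 1 /\ r = norm (D v)) (opnorm D).
Proof.
apply: (epsilon_spec (inhabits 0) (is_lub _)).
have [M hM] := lin_bounded.
set B := fun r => exists v : vec p, norm v <= 1 /\ r = norm (D v).
have hB : bound B by exists M => r [v [hv ->]]; apply: hM.
have hne : exists r, B r by exists 0; exists vzero; rewrite lin0 !norm0; split => //; lra.
by have [s hs] := completeness B hB hne; exists s.
Qed.

Lemma opnorm_ge0 : 0 <= opnorm D.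
Proof. by apply: (proj1 opnorm_lub); exists vzero; rewrite lin0 !norm0; split => //; lra. Qed.

Lemma opnorm_bound v : norm (D v) <= opnorm D * norm v.
Proof.
have [hv|hv] := Rle_lt_or_eq_dec 0 _ (norm_ge0 v).
  set w := vscal (/ norm v) v.
  have hinv : 0 <= / norm v by left; apply: Rinv_0_lt_compat.
  have hw : norm (D w) <= opnorm D.
    apply: (proj1 opnorm_lub); exists w; split => //.
    by rewrite /w norm_scal Rabs_pos_eq // Rinv_l; lra.
  move: hw; rewrite /w (proj2 (HD v vzero _)) norm_scal Rabs_pos_eq // => hw.
  have := Rmult_le_compat_l _ _ _ (norm_ge0 v) hw.
  by rewrite -Rmult_assoc Rinv_r; lra.
have -> : v = vzero.
  apply: functional_extensionality => i; apply: dot_eq0.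
  by rewrite -norm_sq -hv; ring.
by rewrite lin0 !norm0; lra.
Qed.
End OperatorNorm.

Lemma continuity_pt_ball {f : R -> R} {x : R} : continuity_pt f x ->
  forall eps, 0 < eps -> exists del, 0 < del /\
    forall y, Rabs (y - x) < del -> Rabs (f y - f x) < eps.
Proof.
move=> hc eps heps; have [del [hdel hd]] := hc eps heps.
exists del; split => // y hy; have [->|hne] := Req_dec y x.
  by rewrite !Rminus_diag Rabs_R0.
exact: (hd y (conj (conj I (nesym hne)) hy)).
Qed.

Lemma derivable_continuity_pt {f : R -> R} {x l : R} : derivable_pt_lim f x l -> continuity_pt f x.
Proof. by move=> hd; apply: derivable_continuous_pt; exists l. Qed.

Lemma deriv_dot_self {p : nat} (u : R -> vec p) (du : vec p) t :
  (forall i, derivable_pt_lim (fun s => u s i) t (du i)) ->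
  derivable_pt_lim (fun s => dot (u s) (u s)) t (2 * dot (u t) du).
Proof.
move=> H; rewrite /dot -sum_mull.
apply: (@sum_deriv _ _ _ (fun i s => u s i * u s i) (fun i => 2 * (u t i * du i))) => i.
have := derivable_pt_lim_mult _ _ t _ _ (H i) (H i).
by congr derivable_pt_lim; ring.
Qed.

Lemma nonneg_until_escape (L : R -> R) (T : R) :
  (forall t, 0 <= t <= T -> continuity_pt L t) -> L 0 >= 0 ->
  (forall s t1, 0 <= s -> s < t1 <= T -> L s >= 0 ->
     ~ (forall tau, s < tau <= t1 -> L tau < 0)) ->
  forall t, 0 <= t <= T -> L t >= 0.
Proof.
move=> hcont h0 hesc t1 ht1; apply: Rnot_lt_ge => hneg.
pose A tau := 0 <= tau <= t1 /\ L tau >= 0.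
have hbound : bound A by exists t1 => tau [htau _]; lra.
have hne : exists tau, A tau by exists 0; split => //; lra.
have [s [hub hleast]] := completeness A hbound hne.
have hs0 : 0 <= s by apply: hub; split => //; lra.
have hst1 : s <= t1 by apply: hleast => tau [htau _]; lra.
have hafter : forall tau, s < tau <= t1 -> L tau < 0.
  move=> tau htau; apply: Rnot_ge_lt => hL.
  have : tau <= s by apply: hub; split => //; lra.
  lra.
have hLs : L s >= 0.
  apply: Rnot_lt_ge => hLs.
  have hsT : 0 <= s <= T by lra.
  have hLs' : 0 < - L s by lra.
  have [del [hdel hd]] := continuity_pt_ball (hcont s hsT) _ hLs'.
  have : s <= s - del / 2; last lra.
  apply: hleast => tau [htau hL]; apply: Rnot_lt_le => hlt.
  have hts : tau <= s by apply: hub.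
  have hclose : Rabs (tau - s) < del by rewrite Rabs_left1; lra.
  have := hd tau hclose.
  by have := Rle_abs (L tau - L s); lra.
have hs1 : s < t1 by have [//|hs] := Rle_lt_or_eq_dec _ _ hst1; subst s; lra.
exact: (hesc s t1 hs0 (conj hs1 (proj2 ht1)) hLs hafter).
Qed.

Lemma escape_pos_deriv {L : R -> R} {s t1 l : R} :
  s < t1 -> derivable_pt_lim L s l -> 0 < l -> L s >= 0 ->
  ~ (forall tau, s < tau <= t1 -> L tau < 0).
Proof.
move=> hst hd hl hLs hneg.
have [del hdel] := hd (l / 2) ltac:(lra).
have hdp := cond_pos del.
set h := Rmin (del / 2) (t1 - s).
have hh0 : 0 < h by apply: Rmin_pos; lra.
have hh1 : h <= t1 - s by apply: Rmin_r.
have hh2 : h <= del / 2 by apply: Rmin_l.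
have := hdel h ltac:(lra) ltac:(rewrite Rabs_right; lra).
have := Rle_abs (l - (L (s + h) - L s) / h).
rewrite -Rabs_Ropp Ropp_minus_distr => habs hq.
have hquot : 0 < (L (s + h) - L s) / h by lra.
have : 0 < L (s + h) - L s.
  by have := Rmult_lt_0_compat _ _ hquot hh0; rewrite /Rdiv Rmult_assoc Rinv_l; lra.
by have := hneg (s + h) ltac:(lra); lra.
Qed.

(* Gronwall-type barrier: if L' >= K L wherever L < 0, then e^{-K t} L(t)
   is nondecreasing while L < 0, so L cannot become negative from L(s) >= 0. *)
Lemma escape_gronwall {L Ld : R -> R} {K s t1 : R} :
  s < t1 -> (forall tau, s <= tau <= t1 -> derivable_pt_lim L tau (Ld tau)) ->
  L s >= 0 -> (forall tau, s < tau <= t1 -> L tau < 0 -> K * L tau <= Ld tau) ->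
  ~ (forall tau, s < tau <= t1 -> L tau < 0).
Proof.
move=> hst hd hLs hK hneg.
pose E tau := exp (- K * tau) * L tau.
pose Ed tau := exp (- K * tau) * (Ld tau - K * L tau).
have hE : forall tau, s <= tau <= t1 -> derivable_pt_lim E tau (Ed tau).
  move=> tau htau.
  have hexp : derivable_pt_lim (fun r => exp (- K * r)) tau (exp (- K * tau) * - K).
    apply: (derivable_pt_lim_comp (fun r => - K * r) exp).
      have := derivable_pt_lim_scal id (- K) tau 1 (derivable_pt_lim_id tau).
      by rewrite Rmult_1_r.
    exact: derivable_pt_lim_exp.
  have := derivable_pt_lim_mult _ _ tau _ _ hexp (hd tau htau).
  by congr derivable_pt_lim; rewrite /Ed; ring.
have [c [hmvt hc]] := MVT_cor2 E Ed s t1 hst hE.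
have hEd : 0 <= Ed c.
  by apply: Rmult_le_pos; [left; apply: exp_pos | have := hK c ltac:(lra) (hneg c ltac:(lra)); lra].
have hEs : 0 <= E s by apply: Rmult_le_pos; [left; apply: exp_pos | lra].
have hEt1 : 0 <= E t1 by have := Rmult_le_pos _ _ hEd (ltac:(lra) : 0 <= t1 - s); lra.
have := hneg t1 ltac:(lra); have := exp_pos (- K * t1); rewrite /E in hEt1; nra.
Qed.

Section Segments.
Context {n m : nat}.

Definition seg (x D : X n m) (th : R) : X n m := xadd x (xscal th D).

Definition sqdist (x y : X n m) : R :=
  dot (vsub x.1 y.1) (vsub x.1 y.1) + dot (vsub x.2 y.2) (vsub x.2 y.2).

Lemma xnorm_sqdist x y : xnorm (xsub x y) = sqrt (sqdist x y).
Proof. by []. Qed.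

Lemma xnorm_ge0 (D : X n m) : 0 <= xnorm D.
Proof. exact: sqrt_pos. Qed.

Lemma xnorm_scal h (D : X n m) : xnorm (xscal h D) = Rabs h * xnorm D.
Proof.
rewrite /xnorm /xscal /= !dotZl !dotZr -!Rmult_assoc -Rmult_plus_distr_l.
rewrite sqrt_mult; [|nra|by have := dot_ge0 D.1; have := dot_ge0 D.2; lra].
by rewrite -[h * h]/(Rsqr h) sqrt_Rsqr_abs.
Qed.

Lemma seg_diff x D th h : xsub (seg x D (th + h)) (seg x D th) = xscal h D.
Proof.
by rewrite /seg /xsub /xadd /xscal /=; congr pair;
  apply: functional_extensionality => i; rewrite /vsub /vadd /vscal; ring.
Qed.

Lemma seg0 x D : seg x D 0 = x.
Proof.
by case: x => a z; rewrite /seg /xadd /xscal /=; congr pair;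
  apply: functional_extensionality => i; rewrite /vadd /vscal; ring.
Qed.

Lemma seg1 x y : seg x (xsub y x) 1 = y.
Proof.
by case: y => a z; rewrite /seg /xadd /xscal /xsub /=; congr pair;
  apply: functional_extensionality => i; rewrite /vadd /vscal /vsub; ring.
Qed.

Lemma sqdist_seg_convex x x' y th : 0 <= th <= 1 ->
  sqdist (seg x (xsub x' x) th) y <= (1 - th) * sqdist x y + th * sqdist x' y.
Proof.
move=> hth.
have convex_sq : forall k (a a' b : vec k),
    dot (vsub (vadd a (vscal th (vsub a' a))) b) (vsub (vadd a (vscal th (vsub a' a))) b)
    <= (1 - th) * dot (vsub a b) (vsub a b) + th * dot (vsub a' b) (vsub a' b).
  move=> k a a' b; rewrite /dot -!sum_mull -big_split /=; apply: sum_le => i.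
  rewrite /vsub /vadd /vscal.
  by have := Rmult_le_pos _ _ (Rmult_le_pos th (1 - th) ltac:(lra) ltac:(lra))
            (pow2_ge_0 (a' i - a i)); nra.
have := convex_sq _ x.1 x'.1 y.1; have := convex_sq _ x.2 x'.2 y.2.
by rewrite /sqdist /seg /xadd /xscal /xsub /=; lra.
Qed.

Lemma curve_sqdist_small {phi : R -> X n m} {da : vec n} {dz : vec m} {s : R} :
  (forall i, derivable_pt_lim (fun r => (phi r).1 i) s (da i)) ->
  (forall j, derivable_pt_lim (fun r => (phi r).2 j) s (dz j)) ->
  forall eps, 0 < eps -> exists del, 0 < del /\
    forall tau, Rabs (tau - s) < del -> sqdist (phi tau) (phi s) < eps.
Proof.
move=> ha hz eps heps.
have dsub : forall k (c : R -> vec k) (dc : vec k),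
    (forall i, derivable_pt_lim (fun r => c r i) s (dc i)) ->
    forall i, derivable_pt_lim (fun r => vsub (c r) (c s) i) s (dc i - 0).
  by move=> k c dc hc i; apply: derivable_pt_lim_minus => //; apply: derivable_pt_lim_const.
have hd := derivable_pt_lim_plus _ _ s _ _
  (deriv_dot_self (fun r => vsub (phi r).1 (phi s).1) (fun i => da i - 0) s (dsub _ _ _ ha))
  (deriv_dot_self (fun r => vsub (phi r).2 (phi s).2) (fun j => dz j - 0) s (dsub _ _ _ hz)).
have [del [hdel hsmall]] := continuity_pt_ball (derivable_continuity_pt hd) _ heps.
have hzero : forall k (a : vec k), dot (vsub a a) (vsub a a) = 0.
  by move=> k a; rewrite /dot big1 // => i _; rewrite /vsub; ring.
exists del; split => // tau htau.
have := hsmall tau htau; rewrite /plus_fct !hzero Rplus_0_r Rminus_0_r.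
by have := Rle_abs (sqdist (phi tau) (phi s)); rewrite /sqdist; lra.
Qed.

Lemma frechet_along_segment k (F : X n m -> vec k) DA DZ (w : vec k) x D th :
  frechet F DA DZ (seg x D th) ->
  derivable_pt_lim (fun s => dot w (F (seg x D s))) th
                   (dot w (vadd (DA D.1) (DZ D.2))).
Proof.
move=> [hA [hZ hF]] eps heps.
set V := vadd (DA D.1) (DZ D.2).
set c := norm w * xnorm D + 1.
have hwD : 0 <= norm w * xnorm D by apply: Rmult_le_pos; [apply: norm_ge0 | apply: xnorm_ge0].
have hc : 0 < c by rewrite /c; lra.
have heps' : 0 < eps / (2 * c) by apply: Rdiv_lt_0_compat; lra.
have [del [hdel hd]] := hF _ heps'.
have hD1 : 0 < xnorm D + 1 by have := xnorm_ge0 D; lra.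
have hdel' : 0 < del / (xnorm D + 1) by apply: Rdiv_lt_0_compat.
exists (mkposreal _ hdel') => h hh0 /= hh.
have hph : 0 < Rabs h by apply: Rabs_pos_lt.
have hstep : xnorm (xsub (seg x D (th + h)) (seg x D th)) < del.
  rewrite seg_diff xnorm_scal.
  have : Rabs h * (xnorm D + 1) < del.
    by move: hh; rewrite /Rdiv => /(Rmult_lt_compat_r _ _ _ hD1); rewrite Rmult_assoc Rinv_l; lra.
  by have := xnorm_ge0 D; nra.
have := hd _ hstep; rewrite seg_diff xnorm_scal /xscal /=.
rewrite (proj2 (hA D.1 D.1 h)) (proj2 (hZ D.2 D.2 h)).
set G := vsub (F (seg x D (th + h))) (F (seg x D th)).
have -> : vadd (vscal h (DA D.1)) (vscal h (DZ D.2)) = vscal h V.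
  by apply: functional_extensionality => i; rewrite /vadd /vscal /V /vadd; ring.
move=> hrem.
have -> : (dot w (F (seg x D (th + h))) - dot w (F (seg x D th))) / h - dot w V
          = dot w (vsub G (vscal h V)) / h.
  by rewrite dotBr dotZr /G dotBr; field.
rewrite /Rdiv Rabs_mult Rabs_inv.
have hcs : Rabs (dot w (vsub G (vscal h V))) <= norm w * (eps / (2 * c) * (Rabs h * xnorm D)).
  apply: Rle_trans (cauchy_schwarz _ _) _.
  by apply: Rmult_le_compat_l; [apply: norm_ge0 | exact: hrem].
have hfrac : norm w * xnorm D / (2 * c) < 1.
  apply: (Rmult_lt_reg_r (2 * c)); first lra.
  by rewrite /Rdiv Rmult_assoc Rinv_l; [rewrite /c; nra | lra].
have hfrac0 : 0 <= norm w * xnorm D / (2 * c).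
  by apply: Rmult_le_pos => //; left; apply: Rinv_0_lt_compat; lra.
apply: (Rmult_lt_reg_r (Rabs h)) => //.
rewrite Rmult_assoc Rinv_l; last lra.
apply: Rle_lt_trans; first (rewrite Rmult_1_r; exact: hcs).
have -> : norm w * (eps / (2 * c) * (Rabs h * xnorm D)) =
          (eps * Rabs h) * (norm w * xnorm D / (2 * c)) by field; lra.
have : 0 < eps * Rabs h by nra.
nra.
Qed.
End Segments.

Lemma quad_form_ge_inside a b l c u v :
  0 <= b -> 0 <= l -> l + b + c <= a -> 0 <= v <= u ->
  c * u ^ 2 <= a * u ^ 2 - b * u * v - l * v ^ 2.
Proof.
move=> hb hl ha huv.
have : b * u * v <= b * u * u by apply: Rmult_le_compat_l; nra.
have : l * v ^ 2 <= l * u ^ 2 by apply: Rmult_le_compat_l; nra.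
by nra.
Qed.

Lemma quad_form_ge_outside a b l u v :
  0 <= b -> 0 <= l -> l + b <= a -> 0 <= u <= v ->
  a * (u ^ 2 - v ^ 2) <= a * u ^ 2 - b * u * v - l * v ^ 2.
Proof.
move=> hb hl ha huv.
have : 0 <= b * v * (v - u) by apply: Rmult_le_pos; nra.
have : 0 <= (a - b - l) * v ^ 2 by apply: Rmult_le_pos; nra.
by nra.
Qed.

Section ConeField.
Context {n m : nat} {f : X n m -> vec n} {g : X n m -> vec m}
  {U : X n m -> Prop}
  {Daf : X n m -> vec n -> vec n} {Dzf : X n m -> vec m -> vec n}
  {Dag : X n m -> vec n -> vec m} {Dzg : X n m -> vec m -> vec m}
  {alpha ell : X n m -> R} {c1 : R}.
Hypotheses (Hf : C1_on U f Daf Dzf) (Hg : C1_on U g Dag Dzg) (Hc1 : 0 < c1)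
  (Hell_p : forall x, U x -> 0 <= ell x)
  (Hfa : forall x, U x -> forall a' : vec n, dot a' (Daf x a') >= alpha x * norm a' ^ 2)
  (Hgz : forall x, U x -> forall z' : vec m, dot z' (Dzg x z') <= ell x * norm z' ^ 2)
  (Hdom : forall x, U x -> alpha x >= ell x + opnorm (Dzf x) + opnorm (Dag x) + c1).

(* The lower bound, at y, for the derivative of L along the linearized flow,
   in terms of u = |a| and v = |z|. *)
Definition rate (y : X n m) (u v : R) : R :=
  alpha y * u ^ 2 - (opnorm (Dzf y) + opnorm (Dag y)) * u * v - ell y * v ^ 2.

Lemma offdiag_opnorm_ge0 y : U y -> 0 <= opnorm (Dzf y) + opnorm (Dag y).
Proof.
move=> hy; have [_ [hlz _]] := (proj1 Hf) y hy; have [hla _] := (proj1 Hg) y hy.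
by have := opnorm_ge0 _ _ _ hlz; have := opnorm_ge0 _ _ _ hla; lra.
Qed.

Lemma linearization_lower y a z : U y ->
  rate y (norm a) (norm z) <=
  dot a (vadd (Daf y a) (Dzf y z)) - dot z (vadd (Dag y a) (Dzg y z)).
Proof.
move=> hy; have [_ [hlz _]] := (proj1 Hf) y hy; have [hla _] := (proj1 Hg) y hy.
rewrite /rate !dotDr.
have h1 := Hfa y hy a; have h2 := Hgz y hy z.
have h3 := dot_ge a (Dzf y z); have h4 := dot_le z (Dag y a).
have na := norm_ge0 a; have nz := norm_ge0 z.
have : norm a * norm (Dzf y z) <= norm a * (opnorm (Dzf y) * norm z).
  by apply: Rmult_le_compat_l => //; apply: opnorm_bound.
have : norm z * norm (Dag y a) <= norm z * (opnorm (Dag y) * norm a).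
  by apply: Rmult_le_compat_l => //; apply: opnorm_bound.
by nra.
Qed.

Lemma rate_ge_inside_cone {y : X n m} {u v : R} : U y -> 0 <= v <= u -> c1 * u ^ 2 <= rate y u v.
Proof.
move=> hy huv; apply: quad_form_ge_inside => //; first exact: offdiag_opnorm_ge0.
  exact: Hell_p.
by have := Hdom y hy; lra.
Qed.

Lemma rate_ge_outside_cone {y : X n m} {u v : R} : U y -> 0 <= u <= v -> alpha y * (u ^ 2 - v ^ 2) <= rate y u v.
Proof.
move=> hy huv; apply: quad_form_ge_outside => //; first exact: offdiag_opnorm_ge0.
  exact: Hell_p.
by have := Hdom y hy; have := Hc1; lra.
Qed.

Section TwoSolutions.
Hypotheses (HUc : is_convex_X U) (Halpha_c : cont_on_R U alpha).
Context {t0 : R} {phi1 phi2 : R -> X n m}.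
Hypotheses (S1 : solves_on f g phi1 t0) (S2 : solves_on f g phi2 t0)
  (U1 : forall t, 0 <= t <= t0 -> U (phi1 t))
  (U2 : forall t, 0 <= t <= t0 -> U (phi2 t)).

Definition gap (t : R) : X n m := xsub (phi1 t) (phi2 t).
Definition Lc (t : R) : R := Lfun (phi2 t) (phi1 t).
Definition Lc' (t : R) : R :=
  2 * (dot (gap t).1 (vsub (f (phi1 t)) (f (phi2 t)))
       - dot (gap t).2 (vsub (g (phi1 t)) (g (phi2 t)))).

Lemma Lc_deriv {t : R} : 0 <= t <= t0 -> derivable_pt_lim Lc t (Lc' t).
Proof.
move=> ht; have [a1 z1] := S1 t ht; have [a2 z2] := S2 t ht.
have -> : Lc = fun s => dot (gap s).1 (gap s).1 - dot (gap s).2 (gap s).2.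
  by apply: functional_extensionality => s; rewrite /Lc /Lfun !norm_sq.
have := derivable_pt_lim_minus _ _ t _ _
  (deriv_dot_self (fun s => (gap s).1) _ t
     (fun i => derivable_pt_lim_minus _ _ t _ _ (a1 i) (a2 i)))
  (deriv_dot_self (fun s => (gap s).2) _ t
     (fun j => derivable_pt_lim_minus _ _ t _ _ (z1 j) (z2 j))).
by congr derivable_pt_lim; rewrite /Lc' !dotBr /vsub /=; ring.
Qed.

Lemma gap_segment_in_U {t th : R} : 0 <= t <= t0 -> 0 <= th <= 1 ->
  U (seg (phi2 t) (gap t) th).
Proof. by move=> ht hth; apply: HUc => //; [apply: U2 | apply: U1]. Qed.

(* Mean value theorem along the segment [phi2 t, phi1 t]: half the derivative
   of Lc is the linearized cone derivative at some point of the segment. *)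
Lemma Lc'_ge_rate {t : R} : 0 <= t <= t0 -> exists th, 0 <= th <= 1 /\
  rate (seg (phi2 t) (gap t) th) (norm (gap t).1) (norm (gap t).2) <= Lc' t / 2.
Proof.
move=> ht; set x := phi2 t; set D := gap t.
pose H s := dot D.1 (f (seg x D s)) - dot D.2 (g (seg x D s)).
pose H' s := dot D.1 (vadd (Daf (seg x D s) D.1) (Dzf (seg x D s) D.2))
           - dot D.2 (vadd (Dag (seg x D s) D.1) (Dzg (seg x D s) D.2)).
have hd : forall c, 0 <= c <= 1 -> derivable_pt_lim H c (H' c).
  move=> c hc; have hU := gap_segment_in_U ht hc.
  by apply: derivable_pt_lim_minus; apply: frechet_along_segment;
    [apply: (proj1 Hf) | apply: (proj1 Hg)].
have [c [hmvt hc]] := MVT_cor2 H H' 0 1 Rlt_0_1 hd.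
exists c; split; first lra.
have -> : Lc' t / 2 = H 1 - H 0.
  by rewrite /H /D /gap /x seg1 seg0 /Lc' /gap !dotBr; field.
rewrite hmvt Rminus_0_r Rmult_1_r.
by apply: linearization_lower; apply: gap_segment_in_U => //; lra.
Qed.

(* Case |da(s)| > 0: then Lc'(s) > 0, so Lc immediately becomes positive. *)
Lemma escape_off_collision s t1 :
  0 <= s -> s < t1 <= t0 -> Lc s >= 0 -> 0 < norm (gap s).1 ->
  ~ (forall tau, s < tau <= t1 -> Lc tau < 0).
Proof.
move=> hs0 hst hLs hu.
have hs : 0 <= s <= t0 by lra.
apply: (escape_pos_deriv (proj1 hst) (Lc_deriv hs)) => //.
have [th [hth hrate]] := Lc'_ge_rate hs.
have hv := norm_ge0 (gap s).2.
have hLs' : norm (gap s).1 ^ 2 - norm (gap s).2 ^ 2 >= 0 by [].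
have hvu : norm (gap s).2 <= norm (gap s).1 by nra.
have := rate_ge_inside_cone (gap_segment_in_U hs hth) (conj hv hvu).
by have := Rmult_lt_0_compat _ _ Hc1 (pow_lt _ 2 hu); lra.
Qed.

(* Near a collision phi1 s = phi2 s the whole segment [phi2 t, phi1 t] is
   close to phi2 s, so alpha is bounded there by alpha (phi2 s) + 1. *)
Lemma alpha_bounded_near_collision {s : R} : 0 <= s <= t0 -> phi1 s = phi2 s ->
  exists del, 0 < del /\ forall tau th, 0 <= tau <= t0 -> Rabs (tau - s) < del ->
    0 <= th <= 1 -> alpha (seg (phi2 tau) (gap tau) th) < alpha (phi2 s) + 1.
Proof.
move=> hs hcol.
have [da [hda hcont]] := Halpha_c _ (U2 s hs) 1 Rlt_0_1.
have hda2 : 0 < da ^ 2 / 2 by have := pow_lt _ 2 hda; lra.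
have [a1 z1] := S1 s hs; have [a2 z2] := S2 s hs.
have [d1 [hd1 close1]] := curve_sqdist_small a1 z1 _ hda2.
have [d2 [hd2 close2]] := curve_sqdist_small a2 z2 _ hda2.
exists (Rmin d1 d2); split; first exact: Rmin_pos.
move=> tau th htau hclose hth.
have c1' := close1 tau (Rlt_le_trans _ _ _ hclose (Rmin_l d1 d2)).
have c2' := close2 tau (Rlt_le_trans _ _ _ hclose (Rmin_r d1 d2)).
rewrite hcol in c1'.
have hconv := sqdist_seg_convex (phi2 tau) (phi1 tau) (phi2 s) th hth.
have hge0 : 0 <= sqdist (seg (phi2 tau) (gap tau) th) (phi2 s).
  by rewrite /sqdist; have := dot_ge0 (vsub (seg (phi2 tau) (gap tau) th).1 (phi2 s).1);
    have := dot_ge0 (vsub (seg (phi2 tau) (gap tau) th).2 (phi2 s).2); lra.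
have hnear : xnorm (xsub (seg (phi2 tau) (gap tau) th) (phi2 s)) < da.
  rewrite xnorm_sqdist -(sqrt_pow2 da); last lra.
  apply: sqrt_lt_1_alt; split => //.
  have h1 : (1 - th) * sqdist (phi2 tau) (phi2 s) <= (1 - th) * (da ^ 2 / 2).
    by apply: Rmult_le_compat_l; lra.
  have h2 : th * sqdist (phi1 tau) (phi2 s) <= th * (da ^ 2 / 2).
    by apply: Rmult_le_compat_l; lra.
  by have := pow_lt _ 2 hda; rewrite /gap; lra.
have := hcont _ (gap_segment_in_U htau hth) hnear.
by have := Rle_abs (alpha (seg (phi2 tau) (gap tau) th) - alpha (phi2 s)); lra.
Qed.

Lemma collision_of_zero_gap {s : R} : norm (gap s).1 = 0 -> norm (gap s).2 = 0 ->
  phi1 s = phi2 s.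
Proof.
move=> ha hz.
have zero : forall k (u v : vec k), norm (vsub u v) = 0 -> u = v.
  move=> k u v h; apply: functional_extensionality => i.
  have := dot_eq0 (vsub u v) ltac:(by rewrite -norm_sq h; ring) i.
  by rewrite /vsub; lra.
rewrite [phi1 s]surjective_pairing [phi2 s]surjective_pairing.
by rewrite (zero _ _ _ ha) (zero _ _ _ hz).
Qed.

(* Case |da(s)| = 0: the solutions collide at s; near s, wherever Lc < 0,
   Lc' >= 2 alpha Lc >= 2 K Lc, and the Gronwall barrier applies. *)
Lemma escape_at_collision s t1 :
  0 <= s -> s < t1 <= t0 -> Lc s >= 0 -> norm (gap s).1 = 0 ->
  ~ (forall tau, s < tau <= t1 -> Lc tau < 0).
Proof.
move=> hs0 hst hLs hu hneg.
have hs : 0 <= s <= t0 by lra.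
have hv : norm (gap s).2 = 0.
  have hLs' : norm (gap s).1 ^ 2 - norm (gap s).2 ^ 2 >= 0 by [].
  by have := norm_ge0 (gap s).2; rewrite hu in hLs'; nra.
have [del [hdel hbound]] :=
  alpha_bounded_near_collision hs (collision_of_zero_gap hu hv).
set t1' := Rmin t1 (s + del / 2).
have ht1' : s < t1' <= t1.
  by split; [apply: Rmin_glb_lt; lra | apply: Rmin_l].
have ht1'del : t1' <= s + del / 2 by apply: Rmin_r.
apply: (escape_gronwall (L := Lc) (Ld := Lc') (K := 2 * (alpha (phi2 s) + 1)) (proj1 ht1')).
- by move=> tau htau; apply: Lc_deriv; lra.
- exact: hLs.
- move=> tau htau hneg_tau.
  have htau0 : 0 <= tau <= t0 by lra.
  have [th [hth hrate]] := Lc'_ge_rate htau0.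
  have hUy := gap_segment_in_U htau0 hth.
  have hKy := hbound tau th htau0 ltac:(rewrite Rabs_right; lra) hth.
  have hu' := norm_ge0 (gap tau).1; have hv' := norm_ge0 (gap tau).2.
  have hLtau : Lc tau = norm (gap tau).1 ^ 2 - norm (gap tau).2 ^ 2 by [].
  have huv : norm (gap tau).1 <= norm (gap tau).2 by nra.
  have := rate_ge_outside_cone hUy (conj hu' huv); rewrite -hLtau.
  have : 0 <= (alpha (phi2 s) + 1 - alpha (seg (phi2 tau) (gap tau) th)) * - Lc tau.
    by apply: Rmult_le_pos; lra.
  lra.
- by move=> tau htau; apply: hneg; lra.
Qed.

Lemma cone_invariant : Lc 0 >= 0 -> forall t, 0 <= t <= t0 -> Lc t >= 0.
Proof.
move=> h0; apply: nonneg_until_escape => //.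
  by move=> t ht; exact: derivable_continuity_pt (Lc_deriv ht).
move=> s t1 hs0 hst hLs.
have [hu|hu] := Rle_lt_or_eq_dec 0 _ (norm_ge0 (gap s).1).
  exact: escape_off_collision.
exact: escape_at_collision.
Qed.
End TwoSolutions.
End ConeField.

Theorem lemma2p1 (n m : nat) (f : X n m -> vec n) (g : X n m -> vec m)
  (U : X n m -> Prop) (d : R)
  (Daf : X n m -> vec n -> vec n) (Dzf : X n m -> vec m -> vec n)
  (Dag : X n m -> vec n -> vec m) (Dzg : X n m -> vec m -> vec m)
  (alpha ell : X n m -> R) (c1 : R)
  (* Hypothesis 1 *)
  (HUo : is_open_X U) (HUc : is_convex_X U) (Hd : 0 < d)
  (Hcone : forall x x', U x -> U x' -> cone x x' -> boxB d x x')
  (* Hypothesis 2 *)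
  (Hf : C1_on U f Daf Dzf) (Hg : C1_on U g Dag Dzg)
  (Halpha_c : cont_on_R U alpha) (Hell_c : cont_on_R U ell) (Hc1 : 0 < c1)
  (Halpha_p : forall x, U x -> 0 < alpha x)
  (Hell_p : forall x, U x -> 0 <= ell x)
  (Hfa : forall x, U x -> forall a' : vec n, dot a' (Daf x a') >= alpha x * norm a' ^ 2)
  (Hgz : forall x, U x -> forall z' : vec m, dot z' (Dzg x z') <= ell x * norm z' ^ 2)
  (Hdom : forall x, U x -> alpha x >= ell x + opnorm (Dzf x) + opnorm (Dag x) + c1)
  (* the statement *)
  (x1 x2 : X n m) (t0 : R) (phi1 phi2 : R -> X n m) :
  U x1 -> U x2 -> 0 < t0 -> cone x1 x2 ->
  phi1 0 = x1 -> phi2 0 = x2 ->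
  solves_on f g phi1 t0 -> solves_on f g phi2 t0 ->
  (forall t, 0 <= t <= t0 -> U (phi1 t)) ->
  (forall t, 0 <= t <= t0 -> U (phi2 t)) ->
  forall t, 0 <= t <= t0 -> cone (phi1 t) (phi2 t).
Proof.
move=> _ _ _ hcone0 e1 e2 S1 S2 U1 U2.
have hL0 : Lc (phi1 := phi1) (phi2 := phi2) 0 >= 0 by rewrite /Lc e1 e2.
exact: (cone_invariant Hf Hg Hc1 Hell_p Hfa Hgz Hdom HUc Halpha_c S1 S2 U1 U2 hL0).
Qed.
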